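(* Consider the reachability strategy-improvement algorithm described in the context, run on a concurrent game structure $G$ with target $T$ (with all states of $T\cup W_2$ absorbing), producing player-1 selectors $\gamma_0,\gamma_1,\gamma_2,\dots$ and valuations $v_i=\mathrm{val}_1^{\overline{\gamma}_i}(\mathrm{Reach}(T))$ (if the algorithm stops, the sequences are understood as constant from that point on). Then: (1) for all $i\ge 0$, $\overline{\gamma}_i\preceq\overline{\gamma}_{i+1}$; moreover, if $\overline{\gamma}_i=\overline{\gamma}_{i+1}$ then $\overline{\gamma}_i$ is an optimal strategy for $\mathrm{Reach}(T)$, i.e. $\mathrm{val}_1^{\overline{\gamma}_i}(\mathrm{Reach}(T))=\mathrm{val}_1(\mathrm{Reach}(T))$; (2) $\lim_{i\to\infty}v_i=\mathrm{val}_1(\mathrm{Reach}(T))$ pointwise.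
   Context: A concurrent game structure $G=(S,M,\Gamma_1,\Gamma_2,\delta)$: finite states $S$, finite moves $M$, nonempty move sets $\Gamma_1(s),\Gamma_2(s)\subseteq M$, and $\delta(s,a_1,a_2)\in\mathrm{Distr}(S)$ for $a_1\in\Gamma_1(s),a_2\in\Gamma_2(s)$ (moves chosen simultaneously and independently). A state $s$ is absorbing if $\delta(s,a_1,a_2)(s)=1$ for all moves. A selector for player $i$ assigns to each state $s$ a distribution $\xi(s)$ on $\Gamma_i(s)$; $\overline{\xi}$ is the memoryless strategy playing $\xi$ forever. Strategies are maps from finite histories to distributions on available moves; $\Pr_s^{\pi_1,\pi_2}$ is the induced measure on plays from $s$. $\mathrm{Reach}(T)$ is the set of plays visiting $T$. $\mathrm{val}_1^{\pi_1}(\mathrm{Reach}(T))(s)=\inf_{\pi_2}\Pr_s^{\pi_1,\pi_2}(\mathrm{Reach}(T))$ and $\mathrm{val}_1(\mathrm{Reach}(T))=\sup_{\pi_1}\mathrm{val}_1^{\pi_1}(\mathrm{Reach}(T))$; $\pi_1$ is optimal if $\mathrm{val}_1^{\pi_1}=\mathrm{val}_1$ at all states. A valuation is a map $v:S\to[0,1]$, compared pointwise. For selectors $\xi_1,\xi_2$: $\mathrm{Pre}_{\xi_1,\xi_2}(v)(s)=\sum_{a,b}\sum_{t}v(t)\,\delta(s,a,b)(t)\,\xi_1(s)(a)\,\xi_2(s)(b)$, $\mathrm{Pre}_{1:\xi_1}(v)(s)=\inf_{\xi_2}\mathrm{Pre}_{\xi_1,\xi_2}(v)(s)$, $\mathrm{Pre}_1(v)(s)=\sup_{\xi_1}\mathrm{Pre}_{1:\xi_1}(v)(s)$.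 $W_2=\{s:\mathrm{val}_1(\mathrm{Reach}(T))(s)=0\}$; standing assumption: all states in $T\cup W_2$ are absorbing. $\xi^{\mathrm{unif}}$ is the player-1 selector choosing all moves of $\Gamma_1(s)$ uniformly at random at each state. Preorder on player-1 strategies: $\pi_1\prec\pi_1'$ iff $\mathrm{val}_1^{\pi_1}(\mathrm{Reach}(T))\le\mathrm{val}_1^{\pi_1'}(\mathrm{Reach}(T))$ pointwise with strict inequality at some state; $\pi_1\preceq\pi_1'$ iff $\pi_1\prec\pi_1'$ or $\pi_1=\pi_1'$. The algorithm: $\gamma_0=\xi^{\mathrm{unif}}$, $v_0=\mathrm{val}_1^{\overline{\gamma}_0}(\mathrm{Reach}(T))$. At iteration $i$: let $I=\{s\in S\setminus(T\cup W_2):\mathrm{Pre}_1(v_i)(s)>v_i(s)\}$; let $\xi_1$ be a player-1 selector with $\mathrm{Pre}_{1:\xi_1}(v_i)(s)=\mathrm{Pre}_1(v_i)(s)$ for all $s\in I$; set $\gamma_{i+1}(s)=\gamma_i(s)$ for $s\notin I$ and $\gamma_{i+1}(s)=\xi_1(s)$ for $s\in I$; compute $v_{i+1}=\mathrm{val}_1^{\overline{\gamma}_{i+1}}(\mathrm{Reach}(T))$. The algorithm stops and returns $\overline{\gamma}_i$ when $I=\emptyset$. *)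

From HB Require Import structures.
From mathcomp Require Import all_boot all_order all_algebra.
From mathcomp Require Import all_classical all_reals all_analysis.

Set Implicit Arguments.
Unset Strict Implicit.
Unset Printing Implicit Defensive.

Import Order.TTheory GRing.Theory Num.Theory.
Local Open Scope ring_scope.
Local Open Scope classical_set_scope.

Section CGS.
Variables (R : realType) (S M : finType).

(* The transition
   function is total in the type, but it is only constrained (and only ever
   used with positive weight) on available moves. *)
Record cgs := CGS {
  mov1 : S -> {set M};
  mov2 : S -> {set M};
  trans : S -> M -> M -> {ffun S -> R} }.

Definition is_distr_on (A : {set M}) (d : {ffun M -> R}) : Prop :=
  (forall a, 0 <= d a) /\ (forall a, a \notin A -> d a = 0) /\ \sum_a d a = 1.

Definition cgs_wf (G : cgs) : Prop :=
  (forall s, mov1 G s != finset.set0) /\ (forall s, mov2 G s != finset.set0) /\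
  (forall s a b, a \in mov1 G s -> b \in mov2 G s ->
     (forall t, 0 <= trans G s a b t) /\ \sum_t trans G s a b t = 1).

Definition absorbing (G : cgs) (s : S) : Prop :=
  forall a b, a \in mov1 G s -> b \in mov2 G s -> trans G s a b s = 1.

(* A strategy maps a finite history (the previous states h followed by the
   current state s) to a distribution on moves. *)
Definition strategy := seq S -> S -> {ffun M -> R}.
Definition is_strategy1 (G : cgs) (pi : strategy) : Prop :=
  forall h s, is_distr_on (mov1 G s) (pi h s).
Definition is_strategy2 (G : cgs) (pi : strategy) : Prop :=
  forall h s, is_distr_on (mov2 G s) (pi h s).

Definition selector := S -> {ffun M -> R}.
Definition is_selector1 (G : cgs) (xi : selector) : Prop :=
  forall s, is_distr_on (mov1 G s) (xi s).
Definition is_selector2 (G : cgs) (xi : selector) : Prop :=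
  forall s, is_distr_on (mov2 G s) (xi s).

Definition memoryless (xi : selector) : strategy := fun _ s => xi s.

Definition unif_sel (G : cgs) : selector :=
  fun s => [ffun a => if a \in mov1 G s then (#|mov1 G s|%:R)^-1 else 0].

Section Reach.
Variables (G : cgs) (T : {set S}) (pi1 pi2 : strategy).

(* Probability, from history (h, s), that T is visited within n further
   steps (position 0 included). *)
Fixpoint reach_within (n : nat) (h : seq S) (s : S) : R :=
  if s \in T then 1 else
  match n with
  | 0 => 0
  | n'.+1 => \sum_a \sum_b (pi1 h s a * pi2 h s b *
               \sum_t trans G s a b t * reach_within n' (rcons h s) t)
  end.

(* Pr_s^{pi1,pi2}(Reach T): by continuity of the measure, the probability
   of the increasing union of the events "T visited within n steps". *)
Definition reach_prob (s : S) : R :=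
  sup (range (fun n => reach_within n [::] s)).
End Reach.

Definition val1_strat (G : cgs) (T : {set S}) (pi1 : strategy) (s : S) : R :=
  inf [set reach_prob G T pi1 pi2 s | pi2 in [set p | is_strategy2 G p]].

Definition value1 (G : cgs) (T : {set S}) (s : S) : R :=
  sup [set val1_strat G T pi1 s | pi1 in [set p | is_strategy1 G p]].

Definition pre_pair (G : cgs) (xi1 xi2 : selector) (v : S -> R) (s : S) : R :=
  \sum_a \sum_b \sum_t v t * trans G s a b t * xi1 s a * xi2 s b.

Definition pre1_sel (G : cgs) (xi1 : selector) (v : S -> R) (s : S) : R :=
  inf [set pre_pair G xi1 xi2 v s | xi2 in [set x | is_selector2 G x]].

Definition pre1 (G : cgs) (v : S -> R) (s : S) : R :=
  sup [set pre1_sel G xi1 v s | xi1 in [set x | is_selector1 G x]].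

Definition W2 (G : cgs) (T : {set S}) : set S := [set s | value1 G T s = 0].

Definition strat_lt (G : cgs) (T : {set S}) (pi pi' : strategy) : Prop :=
  (forall s, val1_strat G T pi s <= val1_strat G T pi' s) /\
  (exists s, val1_strat G T pi s < val1_strat G T pi' s).
Definition strat_le (G : cgs) (T : {set S}) (pi pi' : strategy) : Prop :=
  strat_lt G T pi pi' \/ pi = pi'.

Definition improve_set (G : cgs) (T : {set S}) (v : S -> R) (s : S) : Prop :=
  s \notin T /\ ~ W2 G T s /\ v s < pre1 G v s.

(* One iteration of the algorithm: gamma' is obtained from gamma.  When I is
   empty this forces gamma' = gamma (the run is constant after stopping). *)
Definition alg_step (G : cgs) (T : {set S}) (gamma gamma' : selector) : Prop :=
  let v := val1_strat G T (memoryless gamma) in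
  exists xi1 : selector, is_selector1 G xi1 /\
    (forall s, improve_set G T v s -> pre1_sel G xi1 v s = pre1 G v s) /\
    (forall s, improve_set G T v s -> gamma' s = xi1 s) /\
    (forall s, ~ improve_set G T v s -> gamma' s = gamma s).

End CGS.

(* Each selector gamma_i is trap-free: player 2 cannot confine the play, against gamma_i,
   to a set of states outside T and W2.  For gamma_0 this holds because such a set would
   have value 0; and it is preserved by a step, since in a trap for gamma_(i+1) the states
   maximising v_i would form a trap for gamma_i (there no pure reply of player 2 can raise
   v_i, so the selector was not changed).  Against a trap-free selector the play settles in
   T or W2 with probability at least p > 0 within |S| steps from anywhere, hence almost
   surely, so every valuation u that vanishes on W2 and satisfies u <= Pre_gamma(u) elsewhere
   lies below the value of gamma-bar.  The value v_i of a memoryless strategy solves the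
   Bellman equation v_i = Pre_(gamma_i)(v_i) outside T, and gamma_(i+1) increases Pre at
   improved states, so v_i <= v_(i+1) and Pre_1(v_i) <= v_(i+1).  Thus the limit of the v_i
   (and v_i itself once the algorithm stops) satisfies Pre_1(u) <= u outside T and u = 1 on T,
   and every such u dominates the value: let player 2 answer every history with a best pure
   reply against u. *)

From HB Require Import structures.
From mathcomp Require Import all_boot all_order all_algebra.
From mathcomp Require Import all_classical all_reals all_analysis.
From mathcomp Require Import ring lra.
Import Order.TTheory GRing.Theory Num.Theory.
Import numFieldNormedType.Exports.
Local Open Scope ring_scope.
Local Open Scope classical_set_scope.
Set Implicit Arguments.
Unset Strict Implicit.
Unset Printing Implicit Defensive.

Section BoundedSupInf.
Variables (R : realType) (E : set R).

Lemma le_sup_ubound (y b : R) : E y -> ubound E b -> y <= sup E.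
Proof. by move=> Ey Eb; apply: ub_le_sup => //; exists b. Qed.

Lemma inf_le_lbound (y b : R) : E y -> lbound E b -> inf E <= y.
Proof. by move=> Ey Eb; apply: ge_inf => //; exists b. Qed.

Lemma sup_adherent_ubound (b eps : R) : 0 < eps -> E !=set0 -> ubound E b ->
  exists2 e, E e & sup E - eps < e.
Proof. by move=> eps0 E0 Eb; apply: sup_adherent => //; split; [|exists b]. Qed.

Lemma inf_adherent_lbound (b eps : R) : 0 < eps -> E !=set0 -> lbound E b ->
  exists2 e, E e & e < inf E + eps.
Proof. by move=> eps0 E0 Eb; apply: inf_adherent => //; split; [|exists b]. Qed.

End BoundedSupInf.

Lemma exists_expr_le (R : realType) (z e : R) : 0 <= z < 1 -> 0 < e ->
  exists n, z ^+ n <= e.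
Proof.
move=> /andP[z0 z1] e0; have zn : `|z| < 1 by rewrite ger0_norm.
have := cvg_expr zn; move/cvgrPdist_lt => /(_ e e0) [N _ HN].
exists N; have := HN N (leqnn N); rewrite /= sub0r normrN ger0_norm ?exprn_ge0 //.
exact: ltW.
Qed.

Lemma exists_pos_lbound (R : realType) (I : finType) (f : I -> R) :
  exists2 p, 0 < p <= 1 & forall i, 0 < f i -> p <= f i.
Proof.
exists (\big[Order.min/1]_(i | 0 < f i) f i) => [|i fi_pos]; last exact: bigmin_le_cond.
rewrite bigmin_le_id andbT.
by apply: (big_ind (fun x => 0 < x)) => // x y x0 y0; rewrite lt_min x0.
Qed.

Section ProbabilityWeights.
Variables (R : realType) (I : finType).

Definition is_prob (w : I -> R) := (forall i, 0 <= w i) /\ \sum_i w i = 1.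

Variable w : I -> R.
Hypothesis w_prob : is_prob w.

Lemma ler_wsum (f g : I -> R) :
  (forall i, f i <= g i) -> \sum_i w i * f i <= \sum_i w i * g i.
Proof. by move=> fg; apply: ler_sum => i _; apply: ler_wpM2l; [case: w_prob|]. Qed.

Lemma wsum_const (c : R) : \sum_i w i * c = c.
Proof. by rewrite -mulr_suml w_prob.2 mul1r. Qed.

Lemma wsumDr (f : I -> R) (c : R) : \sum_i w i * (f i + c) = \sum_i w i * f i + c.
Proof. by under eq_bigr do rewrite mulrDr; rewrite big_split /= wsum_const. Qed.

Lemma wsumBl (f : I -> R) (c : R) : \sum_i w i * (c - f i) = c - \sum_i w i * f i.
Proof. by under eq_bigr do rewrite mulrBr; rewrite sumrB wsum_const. Qed.

Lemma wsum_le_const (f : I -> R) (c : R) : (forall i, f i <= c) -> \sum_i w i * f i <= c.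
Proof. by move=> fc; rewrite -[leRHS]wsum_const; apply: ler_wsum. Qed.

Lemma wsum_ge_const (f : I -> R) (c : R) : (forall i, c <= f i) -> c <= \sum_i w i * f i.
Proof. by move=> cf; rewrite -[leLHS]wsum_const; apply: ler_wsum. Qed.

Lemma wsum_bound (f : I -> R) : (forall i, 0 <= f i <= 1) -> 0 <= \sum_i w i * f i <= 1.
Proof.
by move=> f01; rewrite wsum_ge_const ?wsum_le_const // => i; case/andP: (f01 i).
Qed.

End ProbabilityWeights.

Section MoveDistributions.
Variables (R : realType) (M : finType) (A : {set M}).

Definition unif_distr : {ffun M -> R} :=
  [ffun a => if a \in A then (#|A|%:R)^-1 else 0].

Lemma unif_distr_on : A != finset.set0 -> is_distr_on A unif_distr.
Proof.
move=> A0; have cardA : (0 < #|A|)%N by rewrite card_gt0.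
split; [|split].
- by move=> a; rewrite ffunE; case: ifP => // _; rewrite invr_ge0 ler0n.
- by move=> a /negbTE aA; rewrite ffunE aA.
rewrite (bigID (mem A)) /= [X in _ + X]big1 ?addr0 => [|a /negbTE aA]; last first.
  by rewrite ffunE aA.
under eq_bigr => a aA do rewrite ffunE aA.
by rewrite sumr_const -[X in X = 1]mulr_natr mulVf // pnatr_eq0 -lt0n.
Qed.

Lemma distr_on_wsum_ge (d : {ffun M -> R}) (g : M -> R) c :
  is_distr_on A d -> (forall b, b \in A -> c <= g b) -> c <= \sum_b d b * g b.
Proof.
move=> [d0 [dA d1]] cg; rewrite -[leLHS]mul1r -d1 mulr_suml; apply: ler_sum => b _.
by have [bA|bA] := boolP (b \in A); [rewrite ler_wpM2l ?cg|rewrite dA // !mul0r].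
Qed.

Lemma exists_argmin_in (c : M -> R) : A != finset.set0 ->
  exists2 b, b \in A & forall b', b' \in A -> c b <= c b'.
Proof.
by case/set0Pn=> b0 b0A; case: (arg_minP c b0A) => b bA bmin; exists b.
Qed.

Lemma distr_on_prob (d : {ffun M -> R}) : is_distr_on A d -> is_prob d.
Proof. by case=> d0 [_ d1]. Qed.

Definition point_distr (b : M) : {ffun M -> R} := [ffun b' => (b' == b)%:R].

Lemma point_distr_on b : b \in A -> is_distr_on A (point_distr b).
Proof.
move=> bA; split; [|split].
- by move=> a; rewrite ffunE ler0n.
- by move=> a aA; rewrite ffunE; case: eqP aA => // ->; rewrite bA.
by rewrite (bigD1 b) //= big1 ?addr0 ?ffunE ?eqxx // => a /negbTE ab; rewrite ffunE ab.
Qed.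

Lemma wsum_point_distr b (c : M -> R) : \sum_i point_distr b i * c i = c b.
Proof.
rewrite (bigD1 b) //= big1 ?addr0 ?ffunE ?eqxx ?mul1r // => b' /negbTE bb'.
by rewrite ffunE bb' mul0r.
Qed.

End MoveDistributions.

Section StepDistribution.
Variables (R : realType) (S M : finType) (G : cgs R S M).
Implicit Types (x y : {ffun M -> R}) (s t : S).

Definition step_distr x y s t := \sum_a \sum_b x a * y b * trans G s a b t.

Lemma sum_step_distr x y s (f : S -> R) :
  \sum_a \sum_b (x a * y b * \sum_t trans G s a b t * f t) =
  \sum_t step_distr x y s t * f t.
Proof.
under [RHS]eq_bigr => t _ do rewrite mulr_suml; rewrite [RHS]exchange_big /=.
apply: eq_bigr => a _.
under [RHS]eq_bigr => t _ do rewrite mulr_suml; rewrite [RHS]exchange_big /=.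
by apply: eq_bigr => b _; rewrite mulr_sumr; apply: eq_bigr => t _; rewrite mulrA.
Qed.

Lemma pre_pairE (xi1 xi2 : selector R S M) v s :
  pre_pair G xi1 xi2 v s = \sum_t step_distr (xi1 s) (xi2 s) s t * v t.
Proof.
rewrite -sum_step_distr; apply: eq_bigr => a _; apply: eq_bigr => b _.
by rewrite mulr_sumr; apply: eq_bigr => t _; ring.
Qed.

Hypothesis wf : cgs_wf G.
Variables (x y : {ffun M -> R}) (s : S).
Hypotheses (x_distr : is_distr_on (mov1 G s) x) (y_distr : is_distr_on (mov2 G s) y).

Lemma moves_term_out (F : M -> M -> R) a b :
  ~~ ((a \in mov1 G s) && (b \in mov2 G s)) -> x a * y b * F a b = 0.
Proof.
by case/nandP=> [a1|b2]; [rewrite x_distr.2.1 // !mul0r|rewrite y_distr.2.1 // mulr0 mul0r].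
Qed.

Lemma sum_moves_ge0 (F : M -> M -> R) :
  (forall a b, a \in mov1 G s -> b \in mov2 G s -> 0 <= F a b) ->
  0 <= \sum_a \sum_b x a * y b * F a b.
Proof.
move=> F0; apply: sumr_ge0 => a _; apply: sumr_ge0 => b _.
have [/andP[a1 b2]|out] := boolP ((a \in mov1 G s) && (b \in mov2 G s)).
  by rewrite !mulr_ge0 ?F0 ?x_distr.1 ?y_distr.1.
by rewrite moves_term_out.
Qed.

Lemma sum_moves_const (F : M -> M -> R) c :
  (forall a b, a \in mov1 G s -> b \in mov2 G s -> F a b = c) ->
  \sum_a \sum_b x a * y b * F a b = c.
Proof.
move=> Fc; transitivity (\sum_a x a * \sum_b y b * c); last first.
  by rewrite !wsum_const //; apply: distr_on_prob; [exact: y_distr|exact: x_distr].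
apply: eq_bigr => a _; rewrite mulr_sumr; apply: eq_bigr => b _; rewrite mulrA.
have [/andP[a1 b2]|out] := boolP ((a \in mov1 G s) && (b \in mov2 G s)).
  by rewrite Fc.
by rewrite !moves_term_out.
Qed.

Lemma step_distr_prob : is_prob (step_distr x y s).
Proof.
have trans_distr := proj2 (proj2 wf) s.
split=> [t|]; first by apply: sum_moves_ge0 => a b a1 b2; case: (trans_distr a b a1 b2).
rewrite /step_distr exchange_big /=.
rewrite -[RHS](sum_moves_const (F := fun a b => \sum_t trans G s a b t)); last first.
  by move=> a b a1 b2; case: (trans_distr a b a1 b2).
apply: eq_bigr => a _; rewrite exchange_big /=; apply: eq_bigr => b _.
by rewrite mulr_sumr.
Qed.

Lemma step_distr_absorbing (f : S -> R) :
  absorbing G s -> \sum_t step_distr x y s t * f t = f s.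
Proof.
move=> s_abs; have [w0 w1] := step_distr_prob.
have wss : step_distr x y s s = 1 by apply: sum_moves_const => a b; apply: s_abs.
have wt0 t : t != s -> step_distr x y s t = 0.
  have others0 : \sum_(t | t != s) step_distr x y s t = 0.
    by move: w1; rewrite (bigD1 s) //= wss => /(congr1 (fun z => z - 1)); rewrite addrC addrK subrr.
  by apply: (psumr_eq0P _ others0) => u _; apply: w0.
by rewrite (bigD1 s) //= wss mul1r big1 ?addr0 // => t /wt0 ->; rewrite mul0r.
Qed.

End StepDistribution.

Section ReachWithin.
Variables (R : realType) (S M : finType) (G : cgs R S M) (T : {set S}).
Implicit Types (h : seq S) (s t : S).

Definition shift_strategy (x : S) (pi : strategy R S M) : strategy R S M :=
  fun h s => pi (x :: h) s.

Lemma reach_within_target pi1 pi2 n h s :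
  s \in T -> reach_within G T pi1 pi2 n h s = 1.
Proof. by move=> sT; case: n => /=; rewrite sT. Qed.

Lemma reach_within0 pi1 pi2 h s : s \notin T -> reach_within G T pi1 pi2 0 h s = 0.
Proof. by move=> /negbTE /= ->. Qed.

Lemma reach_within_step pi1 pi2 n h s : s \notin T ->
  reach_within G T pi1 pi2 n.+1 h s =
  \sum_t step_distr G (pi1 h s) (pi2 h s) s t * reach_within G T pi1 pi2 n (rcons h s) t.
Proof. by move=> /negbTE /= ->; rewrite sum_step_distr. Qed.

Lemma reach_within_cons pi1 pi2 n x h s :
  reach_within G T pi1 pi2 n (x :: h) s =
  reach_within G T (shift_strategy x pi1) (shift_strategy x pi2) n h s.
Proof.
elim: n h s => [|n IH] h s //=; case: (s \in T) => //.
by apply: eq_bigr => a _; apply: eq_bigr => b _; congr (_ * _); apply: eq_bigr => t _; rewrite IH.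
Qed.

Lemma reach_within_head_strategy pi1 (P : S -> strategy R S M) t n h s : head s h = t ->
  reach_within G T pi1 (fun h s => P (head s h) h s) n h s =
  reach_within G T pi1 (P t) n h s.
Proof.
elim: n h s => [|n IH] h s ht //=; case: (s \in T) => //; rewrite ht.
apply: eq_bigr => a _; apply: eq_bigr => b _; congr (_ * _).
by apply: eq_bigr => u _; rewrite IH // headI.
Qed.

Hypothesis wf : cgs_wf G.
Variables (pi1 pi2 : strategy R S M).
Hypotheses (pi1_strat : is_strategy1 G pi1) (pi2_strat : is_strategy2 G pi2).

Let step_prob h s := step_distr_prob wf (pi1_strat h s) (pi2_strat h s).

Lemma reach_within_bound n h s : 0 <= reach_within G T pi1 pi2 n h s <= 1.
Proof.
elim: n h s => [|n IH] h s; have [sT|sT] := boolP (s \in T);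
  try by rewrite reach_within_target ?lexx ?ler01.
  by rewrite reach_within0 ?lexx ?ler01.
by rewrite reach_within_step //; apply: (wsum_bound (step_prob h s)) => t; apply: IH.
Qed.

Lemma reach_within_homo h s :
  {homo (fun n => reach_within G T pi1 pi2 n h s) : n m / (n <= m)%N >-> n <= m}.
Proof.
have step n : forall h s,
    reach_within G T pi1 pi2 n h s <= reach_within G T pi1 pi2 n.+1 h s.
  elim: n => [|n IH] h' s'; have [sT|sT] := boolP (s' \in T);
    try by rewrite !reach_within_target.
    by rewrite reach_within0 //; case/andP: (reach_within_bound 1 h' s').
  by rewrite !reach_within_step //; apply: (ler_wsum (step_prob h' s')) => t; apply: IH.
by apply/nondecreasing_seqP => n; apply: step.
Qed.

Lemma reach_within_le_prob n s : reach_within G T pi1 pi2 n [::] s <= reach_prob G T pi1 pi2 s.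
Proof.
apply: (@le_sup_ubound _ _ _ 1); first by exists n.
by move=> _ [m _ <-]; case/andP: (reach_within_bound m [::] s).
Qed.

Lemma reach_prob_le s c :
  (forall n, reach_within G T pi1 pi2 n [::] s <= c) -> reach_prob G T pi1 pi2 s <= c.
Proof.
move=> Hc; apply: ge_sup => [|_ [m _ <-] //].
by exists (reach_within G T pi1 pi2 0 [::] s), 0%N.
Qed.

Lemma reach_prob_bound s : 0 <= reach_prob G T pi1 pi2 s <= 1.
Proof.
apply/andP; split; last by apply: reach_prob_le => n; case/andP: (reach_within_bound n [::] s).
by apply: le_trans (reach_within_le_prob 0 s); case/andP: (reach_within_bound 0 [::] s).
Qed.

Lemma reach_prob_adherent s eps : 0 < eps ->
  exists n, reach_prob G T pi1 pi2 s - eps < reach_within G T pi1 pi2 n [::] s.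
Proof.
move=> eps0; pose E := range (fun n => reach_within G T pi1 pi2 n [::] s).
have [||_ [n _ <-] ?] := @sup_adherent_ubound _ E 1 _ eps0; last by exists n.
- by exists (reach_within G T pi1 pi2 0 [::] s), 0%N.
- by move=> _ [m _ <-]; case/andP: (reach_within_bound m [::] s).
Qed.

Lemma reach_within_missD m c : (forall h s, 1 - reach_within G T pi1 pi2 m h s <= c) ->
  forall n h s, 1 - reach_within G T pi1 pi2 (n + m) h s <=
                (1 - reach_within G T pi1 pi2 n h s) * c.
Proof.
move=> miss_m; elim=> [|n IH] h s; have [sT|sT] := boolP (s \in T);
  try by rewrite !reach_within_target // subrr mul0r.
  by rewrite reach_within0 // subr0 mul1r.
rewrite addSn !reach_within_step // -!wsumBl ?mulr_suml; try exact: step_prob.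
by apply: ler_sum => t _; rewrite -mulrA; apply: ler_wpM2l; [case: (step_prob h s)|apply: IH].
Qed.

Lemma reach_within_miss_geometric m q : (forall h s, 1 - reach_within G T pi1 pi2 m h s <= q) ->
  forall j h s, 1 - reach_within G T pi1 pi2 (j * m) h s <= q ^+ j.
Proof.
move=> miss_m; elim=> [|j IH] h s.
  by rewrite expr0 lerBlDr lerDl; case/andP: (reach_within_bound 0 h s).
have q0 : 0 <= q.
  by apply: le_trans (miss_m h s); rewrite subr_ge0; case/andP: (reach_within_bound m h s).
rewrite mulSn addnC exprSr; apply: le_trans (reach_within_missD miss_m _ h s) _.
by apply: ler_wpM2r.
Qed.

End ReachWithin.

Section Values.
Variables (R : realType) (S M : finType) (G : cgs R S M) (T : {set S}).
Hypothesis wf : cgs_wf G.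

Definition unif_sel2 : selector R S M := fun s => unif_distr R (mov2 G s).

Lemma unif_sel_selector1 : is_selector1 G (unif_sel G).
Proof. by move=> s; apply: unif_distr_on; case: wf => /(_ s). Qed.

Lemma unif_sel2_selector2 : is_selector2 G unif_sel2.
Proof. by move=> s; apply: unif_distr_on; case: wf => _ [/(_ s)]. Qed.

Lemma memoryless_strategy1 xi : is_selector1 G xi -> is_strategy1 G (memoryless xi).
Proof. by move=> xi_sel h s; apply: xi_sel. Qed.

Lemma memoryless_strategy2 xi : is_selector2 G xi -> is_strategy2 G (memoryless xi).
Proof. by move=> xi_sel h s; apply: xi_sel. Qed.

Lemma strategy1_selector pi h : is_strategy1 G pi -> is_selector1 G (pi h).
Proof. by move=> pi_strat s; apply: pi_strat. Qed.

Lemma strategy2_selector pi h : is_strategy2 G pi -> is_selector2 G (pi h).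
Proof. by move=> pi_strat s; apply: pi_strat. Qed.

Section CounterStrategies.
Variables (pi1 : strategy R S M) (s : S).
Hypothesis pi1_strat : is_strategy1 G pi1.

Let replies := [set reach_prob G T pi1 pi2 s | pi2 in [set p | is_strategy2 G p]].

Let replies0 : replies !=set0.
Proof.
exists (reach_prob G T pi1 (memoryless unif_sel2) s), (memoryless unif_sel2) => //.
exact/memoryless_strategy2/unif_sel2_selector2.
Qed.

Let replies_lbound : lbound replies 0.
Proof.
by move=> _ [pi2 pi2_strat <-]; case/andP: (reach_prob_bound T wf pi1_strat pi2_strat s).
Qed.

Lemma val1_strat_le_reach pi2 :
  is_strategy2 G pi2 -> val1_strat G T pi1 s <= reach_prob G T pi1 pi2 s.
Proof. by move=> pi2_strat; apply: inf_le_lbound replies_lbound; exists pi2. Qed.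

Lemma val1_strat_ge c : (forall pi2, is_strategy2 G pi2 -> c <= reach_prob G T pi1 pi2 s) ->
  c <= val1_strat G T pi1 s.
Proof. by move=> Hc; apply: lb_le_inf replies0 _ => _ [pi2 pi2_strat <-]; apply: Hc. Qed.

Lemma val1_strat_bound : 0 <= val1_strat G T pi1 s <= 1.
Proof.
have unif_strat := memoryless_strategy2 unif_sel2_selector2.
apply/andP; split.
  by apply: val1_strat_ge => pi2 pi2_strat; apply: replies_lbound; exists pi2.
apply: le_trans (val1_strat_le_reach unif_strat) _.
by case/andP: (reach_prob_bound T wf pi1_strat unif_strat s).
Qed.

Lemma val1_strat_adherent eps : 0 < eps -> exists2 pi2, is_strategy2 G pi2 &
  reach_prob G T pi1 pi2 s < val1_strat G T pi1 s + eps.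
Proof.
move=> eps0.
by have [_ [pi2 pi2_strat <-] ?] := inf_adherent_lbound eps0 replies0 replies_lbound; exists pi2.
Qed.

End CounterStrategies.

Lemma val1_strat_le_value1 pi1 s : is_strategy1 G pi1 -> val1_strat G T pi1 s <= value1 G T s.
Proof.
move=> pi1_strat; apply: (@le_sup_ubound _ _ _ 1); first by exists pi1.
by move=> _ [pi pi_strat <-]; case/andP: (val1_strat_bound s pi_strat).
Qed.

Lemma value1_le s c : (forall pi1, is_strategy1 G pi1 -> val1_strat G T pi1 s <= c) ->
  value1 G T s <= c.
Proof.
move=> Hc; apply: ge_sup => [|_ [pi1 pi1_strat <-]]; last exact: Hc.
exists (val1_strat G T (memoryless (unif_sel G)) s), (memoryless (unif_sel G)) => //.
exact/memoryless_strategy1/unif_sel_selector1.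
Qed.

Lemma value1_bound s : 0 <= value1 G T s <= 1.
Proof.
have unif_strat := memoryless_strategy1 unif_sel_selector1.
rewrite value1_le ?andbT => [|pi1 pi1_strat]; last by case/andP: (val1_strat_bound s pi1_strat).
by apply: le_trans (val1_strat_le_value1 s unif_strat); case/andP: (val1_strat_bound s unif_strat).
Qed.

End Values.

Definition valuation01 (R : realType) (S : finType) (v : S -> R) := forall s, 0 <= v s <= 1.

Section PreOperators.
Variables (R : realType) (S M : finType) (G : cgs R S M).
Hypothesis wf : cgs_wf G.
Implicit Types (u v w : S -> R) (s : S).

Lemma pre_pair_bound xi1 xi2 v s : is_selector1 G xi1 -> is_selector2 G xi2 ->
  valuation01 v -> 0 <= pre_pair G xi1 xi2 v s <= 1.
Proof.
by move=> xi1_sel xi2_sel v01; rewrite pre_pairE; apply: wsum_bound; first exact: step_distr_prob.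
Qed.

Lemma pre1_sel_le_pair xi1 xi2 v s : is_selector1 G xi1 -> is_selector2 G xi2 ->
  valuation01 v -> pre1_sel G xi1 v s <= pre_pair G xi1 xi2 v s.
Proof.
move=> xi1_sel xi2_sel v01; apply: (@inf_le_lbound _ _ _ 0); first by exists xi2.
by move=> _ [xi xi_sel <-]; case/andP: (pre_pair_bound s xi1_sel xi_sel v01).
Qed.

Lemma pre1_sel_ge xi1 v s c :
  (forall xi2, is_selector2 G xi2 -> c <= pre_pair G xi1 xi2 v s) -> c <= pre1_sel G xi1 v s.
Proof.
move=> Hc; apply: lb_le_inf => [|_ [xi2 xi2_sel <-]]; last exact: Hc.
by exists (pre_pair G xi1 (unif_sel2 G) v s), (unif_sel2 G) => //; apply: unif_sel2_selector2.
Qed.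

Lemma pre1_sel_bound xi1 v s : is_selector1 G xi1 -> valuation01 v ->
  0 <= pre1_sel G xi1 v s <= 1.
Proof.
move=> xi1_sel v01; have unif_sel := unif_sel2_selector2 wf.
apply/andP; split.
  by apply: pre1_sel_ge => xi2 xi2_sel; case/andP: (pre_pair_bound s xi1_sel xi2_sel v01).
apply: le_trans (pre1_sel_le_pair s xi1_sel unif_sel v01) _.
by case/andP: (pre_pair_bound s xi1_sel unif_sel v01).
Qed.

Lemma pre1_sel_local xi1 xi1' v s : xi1 s = xi1' s -> pre1_sel G xi1 v s = pre1_sel G xi1' v s.
Proof. by move=> xi1E; rewrite /pre1_sel /pre_pair xi1E. Qed.

Lemma pre1_sel_le_pre1 xi1 v s : is_selector1 G xi1 -> valuation01 v ->
  pre1_sel G xi1 v s <= pre1 G v s.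
Proof.
move=> xi1_sel v01; apply: (@le_sup_ubound _ _ _ 1); first by exists xi1.
by move=> _ [xi xi_sel <-]; case/andP: (pre1_sel_bound s xi_sel v01).
Qed.

Lemma pre1_le v s c : (forall xi1, is_selector1 G xi1 -> pre1_sel G xi1 v s <= c) ->
  pre1 G v s <= c.
Proof.
move=> Hc; apply: ge_sup => [|_ [xi1 xi1_sel <-]]; last exact: Hc.
by exists (pre1_sel G (unif_sel G) v s), (unif_sel G) => //; apply: unif_sel_selector1.
Qed.

Lemma pre1_sel_leD xi1 v w e s : is_selector1 G xi1 -> valuation01 v -> valuation01 w ->
  (forall t, v t <= w t + e) -> pre1_sel G xi1 v s <= pre1_sel G xi1 w s + e.
Proof.
move=> xi1_sel v01 w01 vw; rewrite -lerBlDr; apply: pre1_sel_ge => xi2 xi2_sel; rewrite lerBlDr.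
apply: le_trans (pre1_sel_le_pair s xi1_sel xi2_sel v01) _.
have w_prob := step_distr_prob wf (xi1_sel s) (xi2_sel s).
by rewrite !pre_pairE -wsumDr //; apply: ler_wsum.
Qed.

Lemma pre1_sel_mono xi1 v w s : is_selector1 G xi1 -> valuation01 v -> valuation01 w ->
  (forall t, v t <= w t) -> pre1_sel G xi1 v s <= pre1_sel G xi1 w s.
Proof.
by move=> xi1_sel v01 w01 vw; rewrite -[leRHS]addr0; apply: pre1_sel_leD => // t; rewrite addr0.
Qed.

Lemma pre1_leD v w e s : valuation01 v -> valuation01 w ->
  (forall t, v t <= w t + e) -> pre1 G v s <= pre1 G w s + e.
Proof.
move=> v01 w01 vw; apply: pre1_le => xi1 xi1_sel.
by apply: le_trans (pre1_sel_leD s xi1_sel v01 w01 vw) _; rewrite lerD2r pre1_sel_le_pre1.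
Qed.

End PreOperators.

Section MemorylessValue.
Variables (R : realType) (S M : finType) (G : cgs R S M) (T : {set S}).
Hypothesis wf : cgs_wf G.
Variable gam : selector R S M.
Hypothesis gam_sel : is_selector1 G gam.

Let gam_strat := memoryless_strategy1 gam_sel.
Let v := val1_strat G T (memoryless gam).

Lemma val1_memoryless01 : valuation01 v.
Proof. by move=> s; apply: val1_strat_bound. Qed.

Lemma pre1_sel_val1_memoryless_le s : s \notin T -> pre1_sel G gam v s <= v s.
Proof.
move=> sT; apply: val1_strat_ge => // pi2 pi2_strat.
have pi2_sel := strategy2_selector [::] pi2_strat.
apply: le_trans (pre1_sel_le_pair wf s gam_sel pi2_sel val1_memoryless01) _.
apply/ler_addgt0Pr => e e0.
have shift_strat : is_strategy2 G (shift_strategy s pi2) by move=> h t; apply: pi2_strat.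
have [N HN] := boolp.choice (fun t => reach_prob_adherent T wf gam_strat shift_strat t e0).
pose K := (\max_t N t).+1.
apply: (@le_trans _ _ (reach_within G T (memoryless gam) pi2 K [::] s + e)); last first.
  by rewrite lerD2r reach_within_le_prob.
rewrite reach_within_step // pre_pairE -wsumDr; last exact: step_distr_prob.
apply: ler_wsum; first exact: step_distr_prob.
move=> t; rewrite reach_within_cons -lerBlDr /=.
apply: le_trans (reach_within_homo T wf gam_strat shift_strat [::] t (leq_bigmax t)).
apply: le_trans (ltW (HN t)); rewrite lerD2r.
exact: val1_strat_le_reach.
Qed.

(* Player 2 answers [xi2] in the first round and then, from the state reached, an
   [e]-optimal reply to the memoryless [gam] with the first state dropped from the history. *)
Lemma val1_memoryless_le_pre1_sel s : s \notin T -> v s <= pre1_sel G gam v s.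
Proof.
move=> sT; apply: (pre1_sel_ge wf) => xi2 xi2_sel; apply/ler_addgt0Pr => e e0.
have near_opt t : exists pi, is_strategy2 G pi /\ reach_prob G T (memoryless gam) pi t < v t + e.
  by have [pi ? ?] := val1_strat_adherent T wf t gam_strat e0; exists pi.
have [P HP] := boolp.choice near_opt.
pose pi2 : strategy R S M := fun h t =>
  if h is _ :: h' then P (head t h') h' t else xi2 t.
have pi2_strat : is_strategy2 G pi2 by move=> [|x h'] t; [apply: xi2_sel|apply: (HP _).1].
apply: le_trans (val1_strat_le_reach T wf s gam_strat pi2_strat) _.
apply: reach_prob_le => -[|n].
  rewrite reach_within0 //; apply: addr_ge0 (ltW e0).
  by case/andP: (pre_pair_bound wf s gam_sel xi2_sel val1_memoryless01).
rewrite reach_within_step // pre_pairE -wsumDr; last exact: step_distr_prob.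
apply: ler_wsum; first exact: step_distr_prob.
move=> t; rewrite reach_within_cons (@reach_within_head_strategy _ _ _ _ _ _ _ t) //.
exact: le_trans (reach_within_le_prob T wf gam_strat (HP t).1 n t) (ltW (HP t).2).
Qed.

End MemorylessValue.

Section PureReplies.
Variables (R : realType) (S M : finType) (G : cgs R S M).
Implicit Types (x : {ffun M -> R}) (u : S -> R) (s : S) (b : M).

Definition pure_reply x s u b := \sum_a x a * \sum_t trans G s a b t * u t.

Lemma sum_step_distr_pure x (y : {ffun M -> R}) s u :
  \sum_t step_distr G x y s t * u t = \sum_b y b * pure_reply x s u b.
Proof.
rewrite -sum_step_distr exchange_big /=; apply: eq_bigr => b _.
by rewrite /pure_reply mulr_sumr; apply: eq_bigr => a _; ring.
Qed.

Hypothesis wf : cgs_wf G.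

Lemma exists_best_pure_reply x s u :
  exists b, b \in mov2 G s /\
    forall b', b' \in mov2 G s -> pure_reply x s u b <= pure_reply x s u b'.
Proof. by case: wf => _ [/(_ s) /(exists_argmin_in (pure_reply x s u)) [b]]; exists b. Qed.

Lemma best_pure_reply_le_pre1_sel (xi1 : selector R S M) u s b : b \in mov2 G s ->
  (forall b', b' \in mov2 G s -> pure_reply (xi1 s) s u b <= pure_reply (xi1 s) s u b') ->
  pure_reply (xi1 s) s u b <= pre1_sel G xi1 u s.
Proof.
move=> b2 bmin; apply: (pre1_sel_ge wf) => xi2 xi2_sel.
by rewrite pre_pairE sum_step_distr_pure; apply: distr_on_wsum_ge (xi2_sel s) _.
Qed.

Lemma pre1_sel_le_pure_reply (xi1 : selector R S M) u s b : is_selector1 G xi1 -> valuation01 u ->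
  b \in mov2 G s -> pre1_sel G xi1 u s <= pure_reply (xi1 s) s u b.
Proof.
move=> xi1_sel u01 b2; pose xi2 t := if t == s then point_distr R b else unif_sel2 G t.
have xi2_sel : is_selector2 G xi2.
  move=> t; rewrite /xi2; case: eqP => [->|_]; first exact: point_distr_on.
  exact: unif_sel2_selector2.
apply: le_trans (pre1_sel_le_pair wf s xi1_sel xi2_sel u01) _.
by rewrite pre_pairE /xi2 eqxx sum_step_distr_pure wsum_point_distr.
Qed.

Section Support.
Variables (x : {ffun M -> R}) (s : S) (b : M).
Hypotheses (x_distr : is_distr_on (mov1 G s) x) (b2 : b \in mov2 G s).

Let trans_ge0 a t : a \in mov1 G s -> 0 <= trans G s a b t.
Proof. by move=> a1; case: (proj2 (proj2 wf) s a b a1 b2). Qed.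

Lemma pure_reply_const m : pure_reply x s (fun=> m) b = m.
Proof.
rewrite /pure_reply -[RHS](wsum_const (distr_on_prob x_distr)); apply: eq_bigr => a _.
have [a1|a1] := boolP (a \in mov1 G s); last by rewrite x_distr.2.1 // !mul0r.
by rewrite -mulr_suml (proj2 (proj2 (proj2 wf) s a b a1 b2)) mul1r.
Qed.

Lemma pure_reply_eq0 u : (forall a t, a \in mov1 G s -> 0 < trans G s a b t -> u t = 0) ->
  pure_reply x s u b = 0.
Proof.
move=> u0; apply: big1 => a _; have [a1|a1] := boolP (a \in mov1 G s); last first.
  by rewrite x_distr.2.1 // mul0r.
rewrite big1 ?mulr0 // => t _.
have [tr_pos|tr_le0] := ltP 0 (trans G s a b t); first by rewrite (u0 a) ?mulr0.
have -> : trans G s a b t = 0 by apply/le_anti; rewrite tr_le0 trans_ge0.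
by rewrite mul0r.
Qed.

Lemma pure_reply_ge_term u a t : (forall t, 0 <= u t) -> a \in mov1 G s ->
  x a * (trans G s a b t * u t) <= pure_reply x s u b.
Proof.
move=> u0 a1; have term_ge0 a' t' : 0 <= x a' * (trans G s a' b t' * u t').
  have [a1'|a1'] := boolP (a' \in mov1 G s); last by rewrite x_distr.2.1 // mul0r.
  by rewrite !mulr_ge0 ?x_distr.1 ?trans_ge0.
rewrite /pure_reply (bigD1 a) //= -[leLHS]addr0 lerD ?sumr_ge0 // => [|a' _]; last first.
  by rewrite mulr_sumr sumr_ge0.
by rewrite mulr_sumr (bigD1 t) //= lerDl sumr_ge0.
Qed.

Lemma pure_reply_ge_max u m :
  (forall a t, a \in mov1 G s -> 0 < x a -> 0 < trans G s a b t -> u t <= m) ->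
  m <= pure_reply x s u b ->
  pure_reply x s u b = m /\
  forall a t, a \in mov1 G s -> 0 < x a -> 0 < trans G s a b t -> u t = m.
Proof.
move=> u_le m_le; pose g a t := x a * (trans G s a b t * (m - u t)).
have g0 a t : 0 <= g a t.
  rewrite /g; have [a1|a1] := boolP (a \in mov1 G s); last by rewrite x_distr.2.1 // mul0r.
  have [xa_pos|xa_le0] := ltP 0 (x a); last first.
    have -> : x a = 0 by apply/le_anti; rewrite xa_le0 x_distr.1.
    by rewrite mul0r.
  have [tr_pos|tr_le0] := ltP 0 (trans G s a b t).
    by rewrite !mulr_ge0 ?subr_ge0 ?(u_le a t) // ltW.
  have -> : trans G s a b t = 0 by apply/le_anti; rewrite tr_le0 trans_ge0.
  by rewrite mul0r mulr0.
have sum_g : \sum_a \sum_t g a t = m - pure_reply x s u b.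
  rewrite -{1}(pure_reply_const m) /pure_reply -sumrB; apply: eq_bigr => a _.
  by rewrite -mulrBr -sumrB mulr_sumr; apply: eq_bigr => t _; rewrite /g mulrBr.
have sum_g0 : \sum_a \sum_t g a t = 0.
  apply/le_anti; rewrite {1}sum_g subr_le0 m_le /=.
  by apply: sumr_ge0 => a _; apply: sumr_ge0.
split; first by apply/eqP; rewrite eq_sym -subr_eq0 -sum_g sum_g0.
move=> a t a1 xa_pos tr_pos.
have ga0 : \sum_t g a t = 0 by apply: (psumr_eq0P _ sum_g0) => // a' _; apply: sumr_ge0.
have /eqP : g a t = 0 by apply: (psumr_eq0P _ ga0).
by rewrite !mulf_eq0 (gt_eqF xa_pos) (gt_eqF tr_pos) subr_eq0 => /eqP.
Qed.

End Support.

End PureReplies.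

Lemma value1_le_prefixpoint (R : realType) (S M : finType) (G : cgs R S M) (T : {set S}) u :
  cgs_wf G -> valuation01 u -> (forall s, s \in T -> u s = 1) ->
  (forall s, s \notin T -> pre1 G u s <= u s) -> forall s, value1 G T s <= u s.
Proof.
move=> wf u01 uT u_pre s; apply: (value1_le wf) => pi1 pi1_strat.
have [best best_min] := boolp.choice (fun hs : seq S * S =>
  exists_best_pure_reply wf (pi1 hs.1 hs.2) hs.2 u).
pose pi2 : strategy R S M := fun h t => point_distr R (best (h, t)).
have pi2_strat : is_strategy2 G pi2 by move=> h t; apply: point_distr_on; case: (best_min (h, t)).
have reach_le n h t : reach_within G T pi1 pi2 n h t <= u t.
  elim: n h t => [|n IH] h t; have [tT|tT] := boolP (t \in T);
    try by rewrite reach_within_target ?uT.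
    by rewrite reach_within0 //; case/andP: (u01 t).
  rewrite reach_within_step //.
  have w_prob := step_distr_prob wf (pi1_strat h t) (pi2_strat h t).
  apply: le_trans (ler_wsum w_prob (IH (rcons h t))) _.
  rewrite sum_step_distr_pure wsum_point_distr; apply: le_trans (u_pre t tT).
  have pi1h_sel := strategy1_selector h pi1_strat.
  apply: le_trans (pre1_sel_le_pre1 wf t pi1h_sel u01).
  by case: (best_min (h, t)) => b2 bmin; apply: best_pure_reply_le_pre1_sel.
apply: le_trans (val1_strat_le_reach T wf s pi1_strat pi2_strat) _.
by apply: reach_prob_le => n; apply: reach_le.
Qed.

Section Traps.
Variables (R : realType) (S M : finType) (G : cgs R S M) (T : {set S}).
Hypothesis wf : cgs_wf G.

Definition trap (gam : selector R S M) (D : {set S}) :=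
  [/\ D != finset.set0, (forall s, s \in D -> s \notin T /\ ~ W2 G T s) &
    forall s, s \in D -> exists2 b, b \in mov2 G s &
      forall a t, a \in mov1 G s -> 0 < gam s a -> 0 < trans G s a b t -> t \in D].

(* Trap-free selectors are the proper ones: following them, the play reaches T or W2
   almost surely (see [le_val1_memoryless]). *)
Definition trap_free (gam : selector R S M) := forall D, ~ trap gam D.

Lemma unif_sel_pos s a : a \in mov1 G s -> 0 < unif_sel G s a.
Proof. by move=> a1; rewrite ffunE a1 invr_gt0 ltr0n card_gt0; case: wf => /(_ s). Qed.

Lemma unif_sel_trap_free : trap_free (unif_sel G).
Proof.
move=> D [/set0Pn [s sD] D_out D_closed].
pose u t : R := (t \notin D)%:R.
have u01 : valuation01 u by move=> t; rewrite /u; case: (t \notin D); rewrite ?lexx ?ler01.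
have [_ sW] := D_out s sD; apply: sW; apply/le_anti.
case/andP: (value1_bound T wf s) => -> _; rewrite andbT.
have -> : 0 = u s by rewrite /u sD.
apply: (value1_le_prefixpoint wf u01) => t tT.
  by rewrite /u; case: (boolP (t \in D)) => // /D_out [/negP].
apply: (pre1_le wf) => xi1 xi1_sel.
have [tD|tD] := boolP (t \in D); last first.
  have -> : u t = 1 by rewrite /u tD.
  by case/andP: (pre1_sel_bound wf t xi1_sel u01).
have [b b2 b_closed] := D_closed t tD.
apply: le_trans (pre1_sel_le_pure_reply wf xi1_sel u01 b2) _.
have -> : u t = 0 by rewrite /u tD.
rewrite (pure_reply_eq0 wf (xi1_sel t) b2) // => a t' a1 tr_pos.
by rewrite /u (b_closed a t' a1 (unif_sel_pos a1) tr_pos).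
Qed.

Lemma trap_free_improve (gam gam' : selector R S M) u :
  is_selector1 G gam' -> valuation01 u ->
  (forall s, s \notin T -> ~ W2 G T s -> u s <= pre1_sel G gam' u s) ->
  (forall s, s \notin T -> ~ W2 G T s -> gam' s != gam s -> u s < pre1_sel G gam' u s) ->
  trap_free gam -> trap_free gam'.
Proof.
(* The states of a trap D for gam' where u is maximal form a trap for gam. *)
move=> gam'_sel u01 u_le u_lt gam_free D [D0 D_out D_closed].
have [s1 s1D s1_max] := exists_argmin_in (fun t => - u t) D0.
have u_max t : t \in D -> u t <= u s1 by move=> tD; rewrite -lerN2 s1_max.
apply: (gam_free [set t in D | u t == u s1]); split.
- by apply/set0Pn; exists s1; rewrite inE s1D eqxx.
- by move=> s; rewrite inE => /andP[/D_out].
move=> s; rewrite inE => /andP[sD /eqP us].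
have [b b2 b_closed] := D_closed s sD; have [sT sW] := D_out s sD.
have reply_le := pre1_sel_le_pure_reply wf gam'_sel u01 b2.
have m_le : u s1 <= pure_reply G (gam' s) s u b by rewrite -us (le_trans (u_le s sT sW)).
have [reply_eq succ_eq] := pure_reply_ge_max wf (gam'_sel s) b2
  (fun a t a1 pos tr => u_max t (b_closed a t a1 pos tr)) m_le.
have gamE : gam' s = gam s.
  apply/eqP; apply/negPn/negP => /(u_lt s sT sW).
  by rewrite us; apply/negP; rewrite -leNgt -reply_eq.
exists b => // a t a1; rewrite -gamE => pos tr.
by rewrite inE (b_closed a t a1 pos tr) (succ_eq a t a1 pos tr) eqxx.
Qed.

End Traps.

Section Attractor.
Variables (R : realType) (S M : finType) (G : cgs R S M) (T : {set S}).
Hypothesis wf : cgs_wf G.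

Definition settled : {set S} := [set s | (s \in T) || `[< W2 G T s >]].

Lemma notin_settled s : s \notin settled <-> s \notin T /\ ~ W2 G T s.
Proof. by rewrite inE negb_or; split=> [/andP[-> /asboolPn]|[-> /asboolPn]]. Qed.

Variable gam : selector R S M.
Hypothesis gam_sel : is_selector1 G gam.

Definition attractor_step (X : {set S}) : {set S} :=
  [set s | (s \in settled) || [forall b, (b \in mov2 G s) ==>
    [exists a, exists t, [&& a \in mov1 G s, 0 < gam s a, t \in X & 0 < trans G s a b t]]]].

Lemma attractor_step_homo : {homo attractor_step : X Y / X \subset Y}.
Proof.
move=> X Y /fintype.subsetP XY; apply/fintype.subsetP => s.
rewrite !inE => /orP[->//|/forallP escape].
apply/orP; right; apply/forallP => b; apply/implyP => /(implyP (escape b)).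
case/existsP=> a /existsP[t /and4P[a1 pos tX tr]].
by apply/existsP; exists a; apply/existsP; exists t; rewrite a1 pos XY.
Qed.

Lemma trap_free_attractor s : trap_free G T gam -> s \in fixset attractor_step.
Proof.
move=> gam_free; apply/negPn/negP => s_out.
have out t : t \notin fixset attractor_step -> t \notin attractor_step (fixset attractor_step).
  by rewrite fixsetK //; apply: attractor_step_homo.
apply: (gam_free (~: fixset attractor_step)); split.
- by apply/set0Pn; exists s; rewrite inE.
- by move=> t; rewrite inE => /out; rewrite inE negb_or => /andP[/notin_settled].
move=> t; rewrite inE => /out; rewrite inE negb_or => /andP[_ /forallPn[b]].
rewrite negb_imply => /andP[b2 /existsPn no_escape]; exists b => // a t' a1 pos tr.
rewrite inE; apply/negP => t'_in.
by move/existsPn: (no_escape a) => /(_ t'); rewrite a1 pos t'_in tr.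
Qed.

Lemma attractor_reach_settled : exists2 p, 0 < p <= 1 & forall pi2, is_strategy2 G pi2 ->
  forall k h s, s \in iter k attractor_step finset.set0 ->
  p ^+ k <= reach_within G settled (memoryless gam) pi2 k h s.
Proof.
pose f (x : S * M * M * S) := gam x.1.1.1 x.1.1.2 * trans G x.1.1.1 x.1.1.2 x.1.2 x.2.
have [p /andP[p_pos p1] p_le] := exists_pos_lbound f.
exists p => [|pi2 pi2_strat]; first by rewrite p_pos p1.
elim=> [|k IH] h s; first by rewrite inE.
have [s_set|s_set] := boolP (s \in settled).
  by rewrite reach_within_target // exprn_ile1 // ltW.
rewrite iterS inE (negbTE s_set) orFb => /forallP escape.
rewrite reach_within_step //; set L := iter k attractor_step finset.set0.
pose ind t : R := (t \in L)%:R.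
have w_prob := step_distr_prob wf (gam_sel s) (pi2_strat h s).
apply: (@le_trans _ _ (\sum_t step_distr G (gam s) (pi2 h s) s t * (p ^+ k * ind t))); last first.
  apply: (ler_wsum w_prob) => t; rewrite /ind; case: (boolP (t \in L)) => tL.
    by rewrite mulr1 IH.
  have gam_strat := memoryless_strategy1 gam_sel.
  by rewrite mulr0; case/andP: (reach_within_bound settled wf gam_strat pi2_strat k (rcons h s) t).
under eq_bigr do rewrite mulrCA.
rewrite -mulr_sumr exprSr ler_pM2l ?exprn_gt0 // sum_step_distr_pure.
apply: distr_on_wsum_ge (pi2_strat h s) _ => b b2.
have /existsP[a /existsP[t /and4P[a1 pos tL tr]]] := implyP (escape b) b2.
apply: le_trans (pure_reply_ge_term wf (gam_sel s) b2 t _ a1); last by move=> t'; rewrite ler0n.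
by rewrite /ind tL mulr1; apply: (p_le (s, a, b, t)); rewrite /f /= mulr_gt0.
Qed.

Lemma trap_free_miss_settled : trap_free G T gam -> exists2 q, 0 <= q < 1 &
  forall pi2, is_strategy2 G pi2 ->
  forall h s, 1 - reach_within G settled (memoryless gam) pi2 #|S| h s <= q.
Proof.
move=> gam_free; have [p /andP[p_pos p1] reach_ge] := attractor_reach_settled.
exists (1 - p ^+ #|S|) => [|pi2 pi2_strat h s].
  have := exprn_gt0 #|S| p_pos; have := exprn_ile1 #|S| (ltW p_pos) p1; lra.
by rewrite lerD2l lerN2; apply: reach_ge (trap_free_attractor s gam_free).
Qed.

End Attractor.

Section TrapFreeBound.
Variables (R : realType) (S M : finType) (G : cgs R S M) (T : {set S}).
Hypothesis wf : cgs_wf G.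
Variables (gam : selector R S M) (u : S -> R).
Hypotheses (gam_sel : is_selector1 G gam) (u01 : valuation01 u).
Hypothesis u_W2 : forall s, s \notin T -> W2 G T s -> u s = 0.
Hypothesis u_le_pre : forall s, s \notin T -> ~ W2 G T s -> u s <= pre1_sel G gam u s.

Let gam_strat := memoryless_strategy1 gam_sel.

Lemma le_reach_within_add_miss pi2 : is_strategy2 G pi2 -> forall n h s,
  u s <= reach_within G T (memoryless gam) pi2 n h s +
         (1 - reach_within G (settled G T) (memoryless gam) pi2 n h s).
Proof.
move=> pi2_strat n h s.
have rT_bound := reach_within_bound T wf gam_strat pi2_strat.
have rS_bound := reach_within_bound (settled G T) wf gam_strat pi2_strat.
have settled_case n' h' t : t \in T \/ W2 G T t ->
    u t <= reach_within G T (memoryless gam) pi2 n' h' t +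
           (1 - reach_within G (settled G T) (memoryless gam) pi2 n' h' t).
  have miss_ge0 : 0 <= 1 - reach_within G (settled G T) (memoryless gam) pi2 n' h' t.
    by rewrite subr_ge0; case/andP: (rS_bound n' h' t).
  case: (boolP (t \in T)) => [tT _|tT [//|tW]].
    by rewrite reach_within_target // -[leLHS]addr0 lerD //; case/andP: (u01 t).
  by rewrite u_W2 // addr_ge0 //; case/andP: (rT_bound n' h' t).
elim: n h s => [|n IH] h s; have [/settled_case //|] := pselect (s \in T \/ W2 G T s).
  move=> /not_orP[/negP sT sW]; have s_set : s \notin settled G T by apply/notin_settled.
  by rewrite !reach_within0 // add0r subr0; case/andP: (u01 s).
move=> /not_orP[/negP sT sW]; have s_set : s \notin settled G T by apply/notin_settled.
have w_prob := step_distr_prob wf (gam_sel s) (pi2_strat h s).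
rewrite !reach_within_step // -wsumBl // -big_split /=.
apply: le_trans (u_le_pre sT sW) _.
apply: le_trans (pre1_sel_le_pair wf s gam_sel (strategy2_selector h pi2_strat) u01) _.
rewrite pre_pairE; apply: ler_sum => t _; rewrite -mulrDr.
by apply: ler_wpM2l; [case: w_prob|apply: IH].
Qed.

Lemma le_val1_memoryless : trap_free G T gam -> forall s, u s <= val1_strat G T (memoryless gam) s.
Proof.
move=> gam_free s; have [q q01 miss_le] := trap_free_miss_settled wf gam_sel gam_free.
apply: (val1_strat_ge wf) => pi2 pi2_strat; apply/ler_addgt0Pr => e e0.
have [j qj] := exists_expr_le q01 e0.
apply: le_trans (le_reach_within_add_miss pi2_strat (j * #|S|) [::] s) _.
apply: lerD; first exact: reach_within_le_prob.
apply: le_trans qj; apply: (reach_within_miss_geometric wf gam_strat pi2_strat) => h t.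
exact: miss_le.
Qed.

End TrapFreeBound.

Section SettledStates.
Variables (R : realType) (S M : finType) (G : cgs R S M) (T : {set S}).
Hypothesis wf : cgs_wf G.

Lemma val1_strat_target pi1 s : is_strategy1 G pi1 -> s \in T -> val1_strat G T pi1 s = 1.
Proof.
move=> pi1_strat sT; apply/le_anti; case/andP: (val1_strat_bound T wf s pi1_strat) => _ -> /=.
apply: (val1_strat_ge wf) => pi2 pi2_strat.
by apply: le_trans (reach_within_le_prob T wf pi1_strat pi2_strat 0 s); rewrite reach_within_target.
Qed.

Lemma val1_strat_W2 pi1 s : is_strategy1 G pi1 -> W2 G T s -> val1_strat G T pi1 s = 0.
Proof.
move=> pi1_strat sW; apply/le_anti; case/andP: (val1_strat_bound T wf s pi1_strat) => -> _.
by rewrite -sW val1_strat_le_value1.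
Qed.

Hypothesis settled_absorbing : forall s, s \in T \/ W2 G T s -> absorbing G s.

Lemma pre1_W2_le u s : valuation01 u -> W2 G T s -> pre1 G u s <= u s.
Proof.
move=> u01 sW; apply: (pre1_le wf) => xi1 xi1_sel.
have unif_sel := unif_sel2_selector2 wf.
apply: le_trans (pre1_sel_le_pair wf s xi1_sel unif_sel u01) _.
rewrite pre_pairE (step_distr_absorbing wf (xi1_sel s) (unif_sel s)) //.
by apply: settled_absorbing; right.
Qed.

End SettledStates.

Section AlgorithmStep.
Variables (R : realType) (S M : finType) (G : cgs R S M) (T : {set S}).
Hypothesis wf : cgs_wf G.
Variables (gam gam' : selector R S M).
Hypotheses (gam_sel : is_selector1 G gam) (step : alg_step G T gam gam').

Let v := val1_strat G T (memoryless gam).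
Let v' := val1_strat G T (memoryless gam').
Let v01 : valuation01 v := val1_memoryless01 T wf gam_sel.

Lemma alg_step_unchanged s : ~ improve_set G T v s -> gam' s = gam s.
Proof. by case: step => xi1 [_ [_ [_ unchanged]]]; apply: unchanged. Qed.

Lemma alg_step_improved s : improve_set G T v s -> pre1_sel G gam' v s = pre1 G v s.
Proof.
case: step => xi1 [_ [xi1_opt [xi1_used _]]] s_imp.
by rewrite (pre1_sel_local _ _ (xi1_used s s_imp)) xi1_opt.
Qed.

Lemma alg_step_selector1 : is_selector1 G gam'.
Proof.
case: step => xi1 [xi1_sel [_ [xi1_used _]]] s.
have [s_imp|s_imp] := pselect (improve_set G T v s); first by rewrite xi1_used.
by rewrite alg_step_unchanged.
Qed.

Lemma alg_step_le_pre1_sel s : s \notin T -> ~ W2 G T s -> v s <= pre1_sel G gam' v s.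
Proof.
move=> sT sW; have [s_imp|s_imp] := pselect (improve_set G T v s).
  by rewrite alg_step_improved //; case: s_imp => _ [_ /ltW].
by rewrite (pre1_sel_local _ _ (alg_step_unchanged s_imp)) val1_memoryless_le_pre1_sel.
Qed.

Lemma alg_step_trap_free : trap_free G T gam -> trap_free G T gam'.
Proof.
apply: (trap_free_improve wf alg_step_selector1 v01 alg_step_le_pre1_sel) => s sT sW.
have [s_imp|s_imp] := pselect (improve_set G T v s); last by rewrite alg_step_unchanged ?eqxx.
by rewrite alg_step_improved //; case: s_imp => _ [].
Qed.

Lemma alg_step_fixed_optimal : (forall s, s \in T \/ W2 G T s -> absorbing G s) ->
  gam' = gam -> forall s, v s = value1 G T s.
Proof.
move=> settled_absorbing gamE s; apply/le_anti.
rewrite val1_strat_le_value1 ?memoryless_strategy1 //=.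
apply: (value1_le_prefixpoint wf v01) => [t tT|t tT].
  by apply: val1_strat_target; rewrite ?memoryless_strategy1.
have [tW|tW] := pselect (W2 G T t); first exact: (pre1_W2_le wf settled_absorbing v01 tW).
rewrite leNgt; apply/negP => lt_pre.
have := alg_step_improved (conj tT (conj tW lt_pre)).
rewrite (pre1_sel_local _ _ (congr1 (fun xi => xi t) gamE)) => pre1E.
by move: lt_pre; rewrite -pre1E ltNge pre1_sel_val1_memoryless_le.
Qed.

Hypothesis gam'_free : trap_free G T gam'.

Lemma alg_step_mono s : v s <= v' s.
Proof.
apply: (le_val1_memoryless wf alg_step_selector1 v01 _ alg_step_le_pre1_sel gam'_free) => t _ tW.
exact: val1_strat_W2 (memoryless_strategy1 gam_sel) tW.
Qed.

Lemma alg_step_pre1_le s : s \notin T -> ~ W2 G T s -> pre1 G v s <= v' s.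
Proof.
move=> sT sW; have [s_imp|s_imp] := pselect (improve_set G T v s).
  rewrite -alg_step_improved //.
  apply: le_trans (pre1_sel_val1_memoryless_le wf alg_step_selector1 sT).
  have v'01 := val1_memoryless01 T wf alg_step_selector1.
  exact: pre1_sel_mono alg_step_selector1 v01 v'01 alg_step_mono.
apply: le_trans (alg_step_mono s); rewrite leNgt; apply/negP => lt_pre.
exact: s_imp.
Qed.

Lemma alg_step_strict : memoryless gam <> memoryless gam' -> exists s, v s < v' s.
Proof.
move=> gam_neq; have [[s [sT [sW lt_pre]]]|no_imp] := pselect (exists s, improve_set G T v s).
  by exists s; apply: lt_le_trans lt_pre (alg_step_pre1_le sT sW).
case: gam_neq; apply: boolp.funext => h; apply: boolp.funext => s.
by rewrite /memoryless alg_step_unchanged // => s_imp; apply: no_imp; exists s.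
Qed.

Lemma alg_step_strat_le : strat_le G T (memoryless gam) (memoryless gam').
Proof.
have [->|gam_neq] := pselect (memoryless gam = memoryless gam'); first by right.
by left; split; [exact: alg_step_mono|exact: alg_step_strict].
Qed.

End AlgorithmStep.

Section AlgorithmRun.
Variables (R : realType) (S M : finType) (G : cgs R S M) (T : {set S}).
Variable gamma : nat -> selector R S M.
Hypothesis wf : cgs_wf G.
Hypothesis settled_absorbing : forall s, s \in T \/ W2 G T s -> absorbing G s.
Hypothesis gamma0 : gamma 0%N = unif_sel G.
Hypothesis steps : forall i, alg_step G T (gamma i) (gamma i.+1).

Let v i := val1_strat G T (memoryless (gamma i)).
Let v_sup s := sup (range (fun i => v i s)).

Lemma alg_run_invariant i : is_selector1 G (gamma i) /\ trap_free G T (gamma i).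
Proof.
elim: i => [|i [sel free]].
  by rewrite gamma0; split; [apply: unif_sel_selector1|apply: unif_sel_trap_free].
by split; [apply: alg_step_selector1 (steps i)|apply: alg_step_trap_free (steps i) free].
Qed.

Let sel i := (alg_run_invariant i).1.

Lemma alg_run_homo s : {homo (fun i => v i s) : i j / (i <= j)%N >-> i <= j}.
Proof.
by apply/nondecreasing_seqP => i; apply: alg_step_mono (steps i) (alg_run_invariant i.+1).2 s.
Qed.

Let v_bound i s : 0 <= v i s <= 1.
Proof. exact: val1_strat_bound (memoryless_strategy1 (sel i)). Qed.

Lemma alg_run_le_sup i s : v i s <= v_sup s.
Proof.
by apply: (@le_sup_ubound _ _ _ 1); [exists i|move=> _ [j _ <-]; case/andP: (v_bound j s)].
Qed.

Lemma alg_run_sup01 : valuation01 v_sup.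
Proof.
move=> s; apply/andP; split.
  by apply: le_trans (alg_run_le_sup 0 s); case/andP: (v_bound 0 s).
by apply: ge_sup => [|_ [j _ <-]]; [exists (v 0%N s), 0%N|case/andP: (v_bound j s)].
Qed.

Lemma alg_run_sup_adherent e : 0 < e -> exists K, forall s, v_sup s - e <= v K s.
Proof.
move=> e0; have near_sup s : exists i, v_sup s - e < v i s.
  have [||_ [i _ <-] ?] := @sup_adherent_ubound _ (range (fun i => v i s)) 1 e e0; last by exists i.
    by exists (v 0%N s), 0%N.
  by move=> _ [j _ <-]; case/andP: (v_bound j s).
have [I I_near] := boolp.choice near_sup.
exists (\max_s I s)%N => s; apply: le_trans (ltW (I_near s)) _.
exact/alg_run_homo/leq_bigmax.
Qed.

Lemma alg_run_sup_prefixpoint s : s \notin T -> pre1 G v_sup s <= v_sup s.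
Proof.
move=> sT; have [sW|sW] := pselect (W2 G T s).
  exact: (pre1_W2_le wf settled_absorbing alg_run_sup01 sW).
apply/ler_addgt0Pr => e e0; have [K K_near] := alg_run_sup_adherent e0.
have sup_le t : v_sup t <= v K t + e by rewrite -lerBlDr K_near.
apply: le_trans (pre1_leD wf s alg_run_sup01 (val1_memoryless01 T wf (sel K)) sup_le) _.
rewrite lerD2r; apply: le_trans (alg_run_le_sup K.+1 s).
exact: alg_step_pre1_le (steps K) (alg_run_invariant K.+1).2 s sT sW.
Qed.

Lemma alg_run_sup_value1 s : v_sup s = value1 G T s.
Proof.
apply/le_anti; apply/andP; split.
  apply: ge_sup => [|_ [j _ <-]]; first by exists (v 0%N s), 0%N.
  exact: val1_strat_le_value1 (memoryless_strategy1 (sel j)).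
apply: (value1_le_prefixpoint wf alg_run_sup01) => [t tT|]; last exact: alg_run_sup_prefixpoint.
apply/le_anti; case/andP: (alg_run_sup01 t) => _ -> /=.
by rewrite -(val1_strat_target wf (memoryless_strategy1 (sel 0)) tT) alg_run_le_sup.
Qed.

End AlgorithmRun.

Theorem theorem3 (R : realType) (S M : finType) (G : cgs R S M) (T : {set S})
    (gamma : nat -> selector R S M) :
  cgs_wf G ->
  (forall s, s \in T \/ W2 G T s -> absorbing G s) ->
  gamma 0%N = unif_sel G ->
  (forall i, alg_step G T (gamma i) (gamma i.+1)) ->
  (forall i,
     strat_le G T (memoryless (gamma i)) (memoryless (gamma i.+1)) /\
     (memoryless (gamma i) = memoryless (gamma i.+1) ->
        forall s, val1_strat G T (memoryless (gamma i)) s = value1 G T s)) /\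
  (forall s, val1_strat G T (memoryless (gamma i)) s @[i --> \oo]
               --> value1 G T s).
Proof.
move=> wf settled_absorbing gamma0 steps.
have invariant := alg_run_invariant wf gamma0 steps.
split=> [i|s].
  have [sel _] := invariant i; split; first exact: alg_step_strat_le (steps i) (invariant i.+1).2.
  move=> gammaE; apply: (alg_step_fixed_optimal wf sel (steps i) settled_absorbing).
  exact: (congr1 (fun pi => pi [::]) (esym gammaE)).
rewrite -(alg_run_sup_value1 wf settled_absorbing gamma0 steps).
apply: nondecreasing_cvgn; first exact: alg_run_homo wf gamma0 steps s.
exists 1 => _ [i _ <-]; have [sel _] := invariant i.
by case/andP: (val1_strat_bound T wf s (memoryless_strategy1 sel)).
Qed.
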